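(* In the setting of a chain BN $X_0\to X_1\to\dots\to X_{n+1}$ with fixed root marginal $P(X_0=1)=q\in(0,1)$, all non-root nodes sharing the table $P(X_i=1\mid X_{i-1}=b)=p_b$, and $f(x)=x_{n+1}$: (1) if $p_0=10^{-5}$ and $p_1=0.5+10^{-5}+0.353$ (so $D_\mu=0.853$), then $D_\mu+D_\sigma>1.2$ and $L_1(f)=\Omega(1.2^n)$; (2) for every $c\in(0,0.0246]$, if $p_0=c$ and $p_1=0.5+c+2\sqrt c$, then $D_\mu+D_\sigma>1+c$ and $L_1(f)=\Omega((1+c)^n)$.
   Context: $D_\mu=|p_1-p_0|$ and $D_\sigma=|\sqrt{p_1(1-p_1)}-\sqrt{p_0(1-p_0)}|$. For a BN, $\mu_{v,x_{\operatorname{pa}(v)}}=P(X_v=1\mid X_{\operatorname{pa}(v)}=x_{\operatorname{pa}(v)})$, $\sigma_{v,x_{\operatorname{pa}(v)}}=\sqrt{\mu_{v,x_{\operatorname{pa}(v)}}(1-\mu_{v,x_{\operatorname{pa}(v)}})}$, the BN-induced basis is $\phi_v(x)=(x_v-\mu_{v,x_{\operatorname{pa}(v)}})/\sigma_{v,x_{\operatorname{pa}(v)}}$, $\phi_S=\prod_{v\in S}\phi_v$; $\hat f_S=\mathbb{E}[f(X)\phi_S(X)]$; $L_1(f)=\sum_S|\hat f_S|$. Asymptotics are as $n\to\infty$ with $q$ fixed. *)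

From HB Require Import structures.
From mathcomp Require Import all_boot all_order all_algebra.
From mathcomp Require Import reals.
Set Implicit Arguments. Unset Strict Implicit. Unset Printing Implicit Defensive.
Import Order.TTheory GRing.Theory Num.Theory.
Local Open Scope ring_scope.

Section Chain.
Variables (R : realType) (n : nat) (q p0 p1 : R).

Definition bool2R (b : bool) : R := if b then 1 else 0.

Definition ptab (b : bool) : R := if b then p1 else p0.

Definition chain_mu (v : 'I_n.+2) (x : {ffun 'I_n.+2 -> bool}) : R :=
  match val v with
  | 0 => q
  | k.+1 => ptab (x (inord k))
  end.

Definition chain_sigma (v : 'I_n.+2) (x : {ffun 'I_n.+2 -> bool}) : R := Num.sqrt (chain_mu v x * (1 - chain_mu v x)).

Definition chain_prob (x : {ffun 'I_n.+2 -> bool}) : R :=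
  \prod_(v : 'I_n.+2) (if x v then chain_mu v x else 1 - chain_mu v x).

Definition phi (v : 'I_n.+2) (x : {ffun 'I_n.+2 -> bool}) : R := (bool2R (x v) - chain_mu v x) / chain_sigma v x.
Definition phiS (S : {set 'I_n.+2}) (x : {ffun 'I_n.+2 -> bool}) : R := \prod_(v in S) phi v x.

Definition fhat (f : {ffun 'I_n.+2 -> bool} -> R) (S : {set 'I_n.+2}) : R :=
  \sum_(x : {ffun 'I_n.+2 -> bool}) chain_prob x * f x * phiS S x.

Definition L1 (f : {ffun 'I_n.+2 -> bool} -> R) : R :=
  \sum_(S : {set 'I_n.+2}) `|fhat f S|.

Definition f_last (x : {ffun 'I_n.+2 -> bool}) : R := bool2R (x ord_max).

End Chain.

Definition L1_last (R : realType) (q p0 p1 : R) (n : nat) : R :=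
  @L1 R n q p0 p1 (@f_last R n).

Definition D_mu (R : realType) (p0 p1 : R) : R := `|p1 - p0|.
Definition D_sigma (R : realType) (p0 p1 : R) : R :=
  `|Num.sqrt (p1 * (1 - p1)) - Num.sqrt (p0 * (1 - p0))|.

Definition BigOmegaPow (R : realType) (u : nat -> R) (r : R) : Prop :=
  exists C : R, 0 < C /\ exists N : nat, forall m : nat, (N <= m)%N -> C * r ^+ m <= u m.

From HB Require Import structures.
From mathcomp Require Import all_boot all_order all_algebra.
From mathcomp Require Import reals zify ring lra.
Import Order.TTheory GRing.Theory Num.Theory.
Local Open Scope ring_scope.

(* Since [phiS] is multiplicative, [\sum_S phiS S x = \prod_v (1 + phi_v x)], so
   [\sum_S fhat_S = E[f(X) \prod_v (1 + phi_v X)]].  Per node,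
   [P(x_v | x_(v-1)) (1 + phi_v x)] equals [mu + sigma] when [x_v = 1] and
   [1 - mu - sigma] when [x_v = 0]: a signed Markov chain whose probability of
   [1] after a [b] is [p_b + sigma_b].  Its mean at the last node therefore obeys
   [G_(k+1) = (p_0 + sigma_0) + (D_mu + D_sigma) G_k], growing like
   [(D_mu + D_sigma)^n] once the gap is at least [1]; and [L_1(f)] dominates
   [\sum_S fhat_S].  In both parameter families [p_0 <= p_1] and
   [sigma_0 <= sigma_1], so the gap is exactly [D_mu + D_sigma], and it exceeds
   the claimed rate by elementary bounds on the square roots. *)

Section ChainWeight.
Context {R : comPzSemiRingType}.

(* [w i a b] weighs the step from [x_(i-1) = a] to [x_i = b]; the root step
   reads [w 0 x_0 x_0]. *)
Definition chain_weight (w : nat -> bool -> bool -> R) N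
    (x : {ffun 'I_N.+1 -> bool}) : R :=
  \prod_(i < N.+1) w i (x (inord i.-1)) (x (inord i)).

Lemma sum_chain_weight0 (w : nat -> bool -> bool -> R) (g : bool -> R) :
  \sum_(x : {ffun 'I_1 -> bool}) chain_weight w 0 x * g (x (inord 0)) =
  \sum_b w 0 b b * g b.
Proof.
have := @bigA_distr_bigA R 0 1 *%R +%R _ _ (fun (_ : 'I_1) b => w 0 b b * g b).
rewrite big_ord1 => ->; apply: eq_bigr => x _.
rewrite big_ord1 /chain_weight big_ord1 /=.
by congr (w 0 (x _) (x _) * g (x _)); apply: val_inj; rewrite /= inordK.
Qed.

Lemma sum_chain_weightS (w : nat -> bool -> bool -> R) N (g : bool -> R) :
  \sum_(x : {ffun 'I_N.+2 -> bool}) chain_weight w N.+1 x * g (x (inord N.+1)) =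
  \sum_(y : {ffun 'I_N.+1 -> bool})
    chain_weight w N y * \sum_b (w N.+1 (y (inord N)) b * g b).
Proof.
pose ext (p : {ffun 'I_N.+1 -> bool} * bool) :=
  [ffun i : 'I_N.+2 => if (i < N.+1)%N then p.1 (inord i) else p.2].
have ext_init p k : (k < N.+1)%N -> ext p (inord k) = p.1 (inord k).
  by move=> hk; rewrite ffunE inordK ?hk //; exact: ltnW.
have ext_last p : ext p (inord N.+1) = p.2 by rewrite ffunE inordK // ltnn.
rewrite (reindex ext); last first.
  exists (fun x : {ffun 'I_N.+2 -> bool} =>
            ([ffun j : 'I_N.+1 => x (inord j)], x (inord N.+1))).
    move=> [y b] _; congr pair; last exact: ext_last.
    by apply/ffunP => j; rewrite ffunE ext_init // inord_val.
  move=> x _; apply/ffunP => i; rewrite ffunE /=.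
  case: ifP => hi; first by rewrite ffunE inordK // inord_val.
  by congr (x _); apply: val_inj; rewrite /= inordK //; move: (ltn_ord i) hi; lia.
rewrite -(pair_bigA _ (fun y b => chain_weight w N.+1 (ext (y, b))
                                   * g (ext (y, b) (inord N.+1)))).
apply: eq_bigr => y _; rewrite mulr_sumr; apply: eq_bigr => b _.
rewrite ext_last /chain_weight big_ord_recr /= ext_last ext_init //= mulrA.
congr (_ * _ * _); apply: eq_bigr => i _ /=.
by rewrite !ext_init // (leq_ltn_trans (leq_pred i)).
Qed.

End ChainWeight.

Lemma sum_phiS (R : realType) n (q p0 p1 : R) (x : {ffun 'I_n.+2 -> bool}) :
  \sum_(S : {set 'I_n.+2}) phiS q p0 p1 S x = \prod_v (phi q p0 p1 v x + 1).
Proof.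
rewrite (bigA_distr 1 +%R (fun v => phi q p0 p1 v x) (fun _ => 1)).
by apply: eq_bigr => S _; rewrite /phiS big_mkcond.
Qed.

Section TiltedChain.
Context {R : realType}.
Variables (q p0 p1 : R).

Definition sdev (m : R) : R := Num.sqrt (m * (1 - m)).

Definition node_mu (k : nat) (a : bool) : R := if k is 0 then q else ptab p0 p1 a.

Definition tilted_weight (k : nat) (a b : bool) : R :=
  (if b then node_mu k a else 1 - node_mu k a)
  * ((bool2R R b - node_mu k a) / sdev (node_mu k a) + 1).

Definition tilted_mean N : R :=
  \sum_(x : {ffun 'I_N.+1 -> bool})
    chain_weight tilted_weight N x * bool2R R (x (inord N)).

Definition tilt_gap : R := p1 + sdev p1 - (p0 + sdev p0).

Lemma prob_mul_sum_phiS n (x : {ffun 'I_n.+2 -> bool}) :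
  chain_prob q p0 p1 x * f_last R x * \sum_(S : {set 'I_n.+2}) phiS q p0 p1 S x
  = chain_weight tilted_weight n.+1 x * bool2R R (x (inord n.+1)).
Proof.
rewrite sum_phiS /f_last mulrAC /chain_prob -big_split /=.
have -> : (ord_max : 'I_n.+2) = inord n.+1 by apply: val_inj; rewrite /= inordK.
congr (_ * _); apply: eq_bigr => v _; rewrite inord_val.
by case: v => [[|k] Hk]; rewrite /phi /chain_sigma /chain_mu /tilted_weight.
Qed.

Lemma tilted_mean_le_L1_last n : tilted_mean n.+1 <= L1_last q p0 p1 n.
Proof.
apply: le_trans (ler_sum _ (fun S _ => ler_norm _)).
rewrite /fhat exchange_big le_eqVlt; apply/orP; left; apply/eqP.
by apply: eq_bigr => x _; rewrite -mulr_sumr prob_mul_sum_phiS.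
Qed.

Lemma tilted_weight_sum k a : tilted_weight k a true + tilted_weight k a false = 1.
Proof. rewrite /tilted_weight /=; ring. Qed.

Lemma tilted_weight_total N :
  \sum_(x : {ffun 'I_N.+1 -> bool}) chain_weight tilted_weight N x = 1.
Proof.
under eq_bigr => x _ do rewrite -[chain_weight _ _ x]mulr1.
elim: N => [|N IH].
  have /= -> := sum_chain_weight0 tilted_weight (fun=> 1).
  by rewrite big_bool /= !mulr1 tilted_weight_sum.
have /= -> := sum_chain_weightS tilted_weight N (fun=> 1).
rewrite -[RHS]IH; apply: eq_bigr => y _.
by rewrite big_bool /= !mulr1 tilted_weight_sum mulr1.
Qed.

Hypotheses (hq : 0 < q < 1) (hp0 : 0 < p0 < 1) (hp1 : 0 < p1 < 1).

Lemma node_mu_in01 k a : 0 < node_mu k a < 1.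
Proof. by case: k => [|k] //=; case: a. Qed.

Lemma sdev_gt0 m : 0 < m < 1 -> 0 < sdev m.
Proof. by move=> /andP[m0 m1]; rewrite sqrtr_gt0 mulr_gt0 ?subr_gt0. Qed.

Lemma tilted_weight_true k a : tilted_weight k a true = node_mu k a + sdev (node_mu k a).
Proof.
have /andP[m0 m1] := node_mu_in01 k a.
have s0 : sdev (node_mu k a) != 0 by rewrite gt_eqF // sdev_gt0 ?m0.
have s2 : sdev (node_mu k a) ^+ 2 = node_mu k a * (1 - node_mu k a).
  by rewrite sqr_sqrtr // mulr_ge0 // ?subr_ge0 ltW.
rewrite /tilted_weight /= mulrDr mulrA -s2 expr2 mulfK //; ring.
Qed.

Lemma tilted_mean_rec N :
  tilted_mean N.+1 = (p0 + sdev p0) + tilt_gap * tilted_mean N.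
Proof.
rewrite /tilted_mean sum_chain_weightS.
under eq_bigr => y _.
  rewrite big_bool /= tilted_weight_true /= mulr0 addr0.
  have -> : ptab p0 p1 (y (inord N)) + sdev (ptab p0 p1 (y (inord N)))
            = (p0 + sdev p0) + tilt_gap * bool2R R (y (inord N)).
    by rewrite /tilt_gap; case: (y (inord N)) => /=; ring.
  rewrite mulr1 mulrDr mulrCA.
  over.
by rewrite big_split /= -mulr_suml -mulr_sumr tilted_weight_total mul1r.
Qed.

Lemma tilted_mean_ge N : 0 <= tilt_gap -> tilt_gap ^+ N * q <= tilted_mean N.
Proof.
move=> gap_ge0; elim: N => [|N IH].
  rewrite /tilted_mean sum_chain_weight0 big_bool /= mulr1 mulr0 addr0.
  by rewrite tilted_weight_true expr0 mul1r lerDl ltW // sdev_gt0.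
have p0_ge0 : 0 <= p0 + sdev p0 by rewrite addr_ge0 ?ltW ?sdev_gt0 //; case/andP: hp0.
by rewrite tilted_mean_rec exprS -mulrA -[X in X <= _]add0r lerD // ler_wpM2l.
Qed.

Lemma L1_last_Omega r : 1 <= r <= tilt_gap -> BigOmegaPow (L1_last q p0 p1) r.
Proof.
move=> /andP[r1 r_gap]; have gap1 := le_trans r1 r_gap.
have [q0 _] := andP hq.
exists q; split => //; exists 0%N => m _.
apply: le_trans (le_trans (tilted_mean_ge m.+1 (le_trans ler01 gap1)) (tilted_mean_le_L1_last m)).
have r_ge0 : 0 <= r := le_trans ler01 r1.
rewrite [q * _]mulrC ler_pM2r // exprS.
have gap_ge0 : 0 <= tilt_gap := le_trans r_ge0 r_gap.
rewrite (le_trans (lerXn2r m _ _ r_gap)) ?nnegrE //.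
by rewrite ler_peMl // exprn_ge0.
Qed.

End TiltedChain.

Section SqrtBounds.
Variables (R : rcfType) (a x : R).
Hypothesis a_ge0 : 0 <= a.

Lemma sqrtr_ge_of_sqr : a ^+ 2 <= x -> a <= Num.sqrt x.
Proof. by move=> hx; rewrite -(ger0_norm a_ge0) -sqrtr_sqr ler_wsqrtr. Qed.

Lemma sqrtr_le_of_sqr : x <= a ^+ 2 -> Num.sqrt x <= a.
Proof. by move=> hx; rewrite -(ger0_norm a_ge0) -sqrtr_sqr ler_wsqrtr. Qed.

Lemma sqrtr_gt_of_sqr : a ^+ 2 < x -> a < Num.sqrt x.
Proof.
move=> hx; rewrite -(ger0_norm a_ge0) -sqrtr_sqr ltr_sqrt //.
by rewrite (le_lt_trans _ hx) // exprn_ge0.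
Qed.

End SqrtBounds.

Section GrowthRegime.
Context {R : realType}.

Lemma D_mu_add_D_sigma (p0 p1 : R) :
  p0 <= p1 -> sdev p0 <= sdev p1 -> D_mu p0 p1 + D_sigma p0 p1 = tilt_gap p0 p1.
Proof.
move=> p01 s01; rewrite /D_mu /D_sigma /tilt_gap -/(sdev p1) -/(sdev p0).
by rewrite !ger0_norm ?subr_ge0 //; ring.
Qed.

Definition growth_regime (p0 p1 r : R) : Prop :=
  [/\ 0 < p0 < 1, 0 < p1 < 1, p0 <= p1, sdev p0 <= sdev p1 & r < tilt_gap p0 p1].

Lemma growth_regime_Omega {q p0 p1 r : R} :
  0 < q < 1 -> growth_regime p0 p1 r -> 1 <= r ->
  r < D_mu p0 p1 + D_sigma p0 p1 /\ BigOmegaPow (L1_last q p0 p1) r.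
Proof.
move=> hq [hp0 hp1 p01 s01 r_gap] r1; rewrite D_mu_add_D_sigma //.
by split => //; apply: L1_last_Omega => //; rewrite r1 ltW.
Qed.

Lemma growth_regime_fixed :
  growth_regime (10 ^- 5) (2^-1 + 10 ^- 5 + 353 / 1000) (6 / 5 : R).
Proof.
set e : R := 10 ^- 5.
have e0 : 0 < e by rewrite invr_gt0 exprn_gt0.
have e_inv : e * (10 * 10000) = 1.
  have -> : (10 : R) * 10000 = 10 ^+ 5 by rewrite !exprS expr0; ring.
  by rewrite mulVf // expf_neq0 // pnatr_eq0.
have s1 : 354 / 1000 <= sdev (2^-1 + e + 353 / 1000).
  by apply: sqrtr_ge_of_sqr; [lra | rewrite expr2; nra].
have s0 : sdev e <= 32 / 10000.
  by apply: sqrtr_le_of_sqr; [lra | rewrite expr2; nra].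
rewrite /growth_regime /tilt_gap; split; lra.
Qed.

Lemma growth_regime_sqrt {c : R} : 0 < c -> c <= 246 / 10000 ->
  growth_regime c (2^-1 + c + 2 * Num.sqrt c) (1 + c).
Proof.
move=> c0 c1; set s := Num.sqrt c.
have s0 : 0 < s by rewrite sqrtr_gt0.
have cs : c = s * s by rewrite -expr2 sqr_sqrtr // ltW.
have s_le : s <= 3137 / 20000 by apply: sqrtr_le_of_sqr; [lra | rewrite expr2; lra].
have sd0 : sdev c <= s by apply: sqrtr_le_of_sqr; [lra | rewrite expr2 -cs; nra].
have sd1 : 2^-1 - s + s * s < sdev (2^-1 + c + 2 * s).
  by apply: sqrtr_gt_of_sqr; [nra | rewrite cs !expr2; nra].
rewrite /growth_regime /tilt_gap; split; [lra | apply/andP; split; nra | lra | nra | nra].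
Qed.

End GrowthRegime.

Theorem mainTheorem10 (R : realType) (q : R) (hq : 0 < q < 1) :
  (let p0 : R := 10 ^- 5 in
   let p1 : R := 2^-1 + 10 ^- 5 + 353 / 1000 in
   6 / 5 < D_mu p0 p1 + D_sigma p0 p1 /\
   BigOmegaPow (L1_last q p0 p1) (6 / 5))
  /\
  (forall c : R, 0 < c -> c <= 246 / 10000 ->
   let p0 : R := c in
   let p1 : R := 2^-1 + c + 2 * Num.sqrt c in
   1 + c < D_mu p0 p1 + D_sigma p0 p1 /\
   BigOmegaPow (L1_last q p0 p1) (1 + c)).
Proof.
split=> [p0 p1 | c c0 c1 p0 p1]; rewrite {}/p0 {}/p1.
  by apply: growth_regime_Omega hq growth_regime_fixed _; lra.
apply: growth_regime_Omega hq (growth_regime_sqrt c0 c1) _.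
by rewrite lerDl ltW.
Qed.
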